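(* Let $\mathsf{MRK}$ be the axiom scheme $\neg\forall\alpha\mathsf{P}\to\exists\alpha\mathsf{P}^\bot$ for atomic $\mathsf{P}$. (1) Every instance of $\mathsf{MRK}$ is provable in $\mathsf{HA}+\mathsf{EM}^-$. (2) Conversely, the rule $\mathsf{EM}^-$ is derivable in $\mathsf{HA}+\mathsf{MRK}$: for every formula $A$ and atomic $\mathsf{P}$, if $\Gamma,A\vdash\exists\alpha\mathsf{P}$ and $\Gamma,\neg A\vdash\exists\alpha\mathsf{P}$ in $\mathsf{HA}+\mathsf{MRK}$, then $\Gamma\vdash\exists\alpha\mathsf{P}$ in $\mathsf{HA}+\mathsf{MRK}$.
   Context: $\mathsf{HA}$ is intuitionistic first-order arithmetic (Heyting arithmetic, in natural deduction) over $0,\mathsf{S},+,\cdot,=$ with the Peano axioms and induction scheme; atomic formulas are decidable and $\mathsf{P}^\bot$ denotes the complementary atomic predicate of $\mathsf{P}$ (so $\mathsf{P}^\bot\equiv\neg\mathsf{P}$). $\mathsf{HA}+\mathsf{EM}^-$ is $\mathsf{HA}$ extended with the rule $\mathsf{EM}^-$: for an arbitrary formula $A$ and atomic $\mathsf{P}$, from $\Gamma,A\vdash\exists x\mathsf{P}$ and $\Gamma,\neg A\vdash\exists x\mathsf{P}$ infer $\Gamma\vdash\exists x\mathsf{P}$ (discharging $A$ and $\neg A$). $\mathsf{HA}+\mathsf{MRK}$ is $\mathsf{HA}$ with the instances of $\mathsf{MRK}$ as additional axioms. *)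

From Stdlib Require Import List.
Import ListNotations.

Inductive term : Type :=
| var : nat -> term
| zero : term
| succ : term -> term
| plus : term -> term -> term
| mult : term -> term -> term.

Inductive atom : Type :=
| Eq : term -> term -> atom
| Neq : term -> term -> atom.

Definition compl (p : atom) : atom :=
  match p with
  | Eq t s => Neq t s
  | Neq t s => Eq t s
  end.

Inductive form : Type :=
| Atom : atom -> form
| Bot : form
| Imp : form -> form -> form
| And : form -> form -> form
| Or : form -> form -> form
| All : form -> form     (* binds de Bruijn variable 0 *)
| Ex : form -> form.

Definition Not (A : form) : form := Imp A Bot.

Fixpoint tsubst (s : nat -> term) (t : term) : term :=
  match t with
  | var n => s n
  | zero => zero
  | succ u => succ (tsubst s u)
  | plus u v => plus (tsubst s u) (tsubst s v)
  | mult u v => mult (tsubst s u) (tsubst s v)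
  end.

Definition up (s : nat -> term) : nat -> term :=
  fun n => match n with
           | 0 => var 0
           | S k => tsubst (fun m => var (S m)) (s k)
           end.

Definition asubst (s : nat -> term) (p : atom) : atom :=
  match p with
  | Eq t u => Eq (tsubst s t) (tsubst s u)
  | Neq t u => Neq (tsubst s t) (tsubst s u)
  end.

Fixpoint fsubst (s : nat -> term) (A : form) : form :=
  match A with
  | Atom p => Atom (asubst s p)
  | Bot => Bot
  | Imp B C => Imp (fsubst s B) (fsubst s C)
  | And B C => And (fsubst s B) (fsubst s C)
  | Or B C => Or (fsubst s B) (fsubst s C)
  | All B => All (fsubst (up s) B)
  | Ex B => Ex (fsubst (up s) B)
  end.

Definition lift (A : form) : form := fsubst (fun n => var (S n)) A.

Definition subst0 (t : term) (A : form) : form :=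
  fsubst (fun n => match n with 0 => t | S k => var k end) A.

Definition substS (A : form) : form :=
  fsubst (fun n => match n with 0 => succ (var 0) | S k => var (S k) end) A.

(* Axioms of HA (open formulas; free variables are implicitly universal,
   thanks to the quantifier rules). *)
Inductive HAax : form -> Prop :=
| ax_refl : forall t, HAax (Atom (Eq t t))
| ax_leibniz : forall t s A,
    HAax (Imp (Atom (Eq t s)) (Imp (subst0 t A) (subst0 s A)))
| ax_succ_ne0 : forall t, HAax (Not (Atom (Eq (succ t) zero)))
| ax_succ_inj : forall t s,
    HAax (Imp (Atom (Eq (succ t) (succ s))) (Atom (Eq t s)))
| ax_plus0 : forall t, HAax (Atom (Eq (plus t zero) t))
| ax_plusS : forall t s, HAax (Atom (Eq (plus t (succ s)) (succ (plus t s))))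
| ax_mult0 : forall t, HAax (Atom (Eq (mult t zero) zero))
| ax_multS : forall t s, HAax (Atom (Eq (mult t (succ s)) (plus (mult t s) t)))
(* the complementary predicate: P^bot <-> ~P *)
| ax_neq1 : forall t s, HAax (Imp (Atom (Neq t s)) (Not (Atom (Eq t s))))
| ax_neq2 : forall t s, HAax (Imp (Not (Atom (Eq t s))) (Atom (Neq t s)))
| ax_ind : forall A,
    HAax (Imp (subst0 zero A) (Imp (All (Imp A (substS A))) (All A))).

Definition MRK (p : atom) : form :=
  Imp (Not (All (Atom p))) (Ex (Atom (compl p))).

Inductive MRKax : form -> Prop :=
| mrk_inst : forall p, MRKax (MRK p).

(* Natural deduction derivability  Gamma |- A, over extra axioms [ax];
   if [em] is true, the rule EM^- is available. *)
Inductive prov (ax : form -> Prop) (em : bool) : list form -> form -> Prop :=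
| p_hyp : forall G A, In A G -> prov ax em G A
| p_ax : forall G A, ax A -> prov ax em G A
| p_impI : forall G A B, prov ax em (A :: G) B -> prov ax em G (Imp A B)
| p_impE : forall G A B, prov ax em G (Imp A B) -> prov ax em G A -> prov ax em G B
| p_andI : forall G A B, prov ax em G A -> prov ax em G B -> prov ax em G (And A B)
| p_andE1 : forall G A B, prov ax em G (And A B) -> prov ax em G A
| p_andE2 : forall G A B, prov ax em G (And A B) -> prov ax em G B
| p_orI1 : forall G A B, prov ax em G A -> prov ax em G (Or A B)
| p_orI2 : forall G A B, prov ax em G B -> prov ax em G (Or A B)
| p_orE : forall G A B C, prov ax em G (Or A B) ->
    prov ax em (A :: G) C -> prov ax em (B :: G) C -> prov ax em G C
| p_botE : forall G A, prov ax em G Bot -> prov ax em G A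
| p_allI : forall G A, prov ax em (map lift G) A -> prov ax em G (All A)
| p_allE : forall G A t, prov ax em G (All A) -> prov ax em G (subst0 t A)
| p_exI : forall G A t, prov ax em G (subst0 t A) -> prov ax em G (Ex A)
| p_exE : forall G A B, prov ax em G (Ex A) ->
    prov ax em (A :: map lift G) (lift B) -> prov ax em G B
| p_EMminus : forall G A p, em = true ->
    prov ax em (A :: G) (Ex (Atom p)) ->
    prov ax em (Not A :: G) (Ex (Atom p)) ->
    prov ax em G (Ex (Atom p)).

Definition HA_EM (G : list form) (A : form) : Prop := prov HAax true G A.

Definition HA_MRK (G : list form) (A : form) : Prop :=
  prov (fun B => HAax B \/ MRKax B) false G A.

(* MRK from EM^-: assuming ~ forall x P, apply EM^- to the formula exists x P^bot
   itself.  Its negation yields ~ P^bot at a fresh variable, hence P there (a second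
   use of EM^-, on the atom P, replaces the HA proof that atoms are decidable), so
   forall x P, a contradiction.
   EM^- from MRK: the instance of MRK for P^bot concludes exists x P, so it suffices to
   refute forall x P^bot.  That hypothesis refutes exists x P, and then the two given
   derivations refute both A and ~ A. *)
From Stdlib Require Import List.
Import ListNotations.

Lemma tsubst_comp s r q t :
  (forall n, q n = tsubst s (r n)) -> tsubst s (tsubst r t) = tsubst q t.
Proof. intro Hq; induction t; simpl; congruence. Qed.

Lemma tsubst_id s t : (forall n, s n = var n) -> tsubst s t = t.
Proof. intro Hs; induction t; simpl; congruence. Qed.

Lemma up_comp s r q :
  (forall n, q n = tsubst s (r n)) -> forall n, up q n = tsubst (up s) (up r n).
Proof.
  intros Hq [|n]; simpl; [reflexivity |].
  rewrite Hq, !(tsubst_comp _ _ (fun m => tsubst (fun k => var (S k)) (s m))); reflexivity.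
Qed.

Lemma up_id s : (forall n, s n = var n) -> forall n, up s n = var n.
Proof. intros Hs [|n]; simpl; [| rewrite Hs]; reflexivity. Qed.

Lemma fsubst_comp A : forall s r q,
  (forall n, q n = tsubst s (r n)) -> fsubst s (fsubst r A) = fsubst q A.
Proof.
  induction A as [[t u | t u] | | B IHB C IHC | B IHB C IHC | B IHB C IHC | B IHB | B IHB];
    intros s r q Hq; simpl; rewrite ?(tsubst_comp s r q) by exact Hq;
    f_equal; auto using up_comp.
Qed.

Lemma fsubst_id A : forall s, (forall n, s n = var n) -> fsubst s A = A.
Proof.
  induction A as [[t u | t u] | | B IHB C IHC | B IHB C IHC | B IHB C IHC | B IHB | B IHB];
    intros s Hs; simpl; rewrite ?(tsubst_id s) by exact Hs; f_equal; auto using up_id.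
Qed.

Lemma subst0_lift t A : subst0 t (lift A) = A.
Proof.
  unfold subst0, lift; rewrite (fsubst_comp A _ _ var); [apply fsubst_id |]; reflexivity.
Qed.

(* [fsubst (up _) A] is the body of [lift (All A)] and of [lift (Ex A)]. *)
Lemma subst0_var0_up_shift A :
  subst0 (var 0) (fsubst (up (fun n => var (S n))) A) = A.
Proof.
  unfold subst0; rewrite (fsubst_comp A _ _ var); [apply fsubst_id; reflexivity |].
  intros [|n]; reflexivity.
Qed.

Lemma compl_involutive p : compl (compl p) = p.
Proof. destruct p; reflexivity. Qed.

Lemma incl_cons_cons {X} (a : X) l m : incl l m -> incl (a :: l) (a :: m).
Proof. intros Hlm x [-> | Hx]; [left | right; apply Hlm]; auto. Qed.

Ltac hyp := apply p_hyp; simpl; tauto.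

Section Derived_rules.

Variables (ax : form -> Prop) (em : bool).

Lemma prov_weaken G G' A : prov ax em G A -> incl G G' -> prov ax em G' A.
Proof.
  intro HG; revert G'; induction HG; intros G' Hincl;
    eauto using prov, incl_cons_cons, incl_map.
  - apply p_orE with A B; auto using incl_cons_cons.
  - apply p_exE with A; auto using incl_cons_cons, incl_map.
  - apply p_EMminus with A; auto using incl_cons_cons.
Qed.

Lemma prov_ex_lift G B : prov ax em G B -> prov ax em G (Ex (lift B)).
Proof. intro HB; apply p_exI with zero; rewrite subst0_lift; exact HB. Qed.

Lemma prov_of_ex_lift G B : prov ax em G (Ex (lift B)) -> prov ax em G B.
Proof. intro HB; apply p_exE with (lift B); [exact HB | hyp]. Qed.

Lemma prov_lift_all_elim G A : In (lift (All A)) G -> prov ax em G A.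
Proof.
  intro HA; rewrite <- (subst0_var0_up_shift A); apply p_allE, p_hyp, HA.
Qed.

Lemma prov_lift_ex_intro G A : prov ax em G A -> prov ax em G (lift (Ex A)).
Proof.
  intro HA; apply p_exI with (var 0); rewrite subst0_var0_up_shift; exact HA.
Qed.

Hypothesis ax_HA : forall B, HAax B -> ax B.

Lemma prov_atom_compl_absurd G p :
  prov ax em G (Atom p) -> prov ax em G (Atom (compl p)) -> prov ax em G Bot.
Proof.
  intros Hp Hcp; destruct p as [t s | t s]; simpl in Hcp.
  - apply p_impE with (Atom (Eq t s)); [| exact Hp].
    apply p_impE with (Atom (Neq t s)); [apply p_ax, ax_HA, ax_neq1 | exact Hcp].
  - apply p_impE with (Atom (Eq t s)); [| exact Hcp].
    apply p_impE with (Atom (Neq t s)); [apply p_ax, ax_HA, ax_neq1 | exact Hp].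
Qed.

End Derived_rules.

Section EMminus_proves_MRK.

Variable ax : form -> Prop.
Hypothesis ax_HA : forall B, HAax B -> ax B.

Lemma EMminus_atom G A q :
  prov ax true (A :: G) (Atom q) -> prov ax true (Not A :: G) (Atom q) ->
  prov ax true G (Atom q).
Proof.
  intros HA HnA; apply prov_of_ex_lift.
  apply p_EMminus with A; [reflexivity | |];
    apply (prov_ex_lift _ _ _ (Atom q)); assumption.
Qed.

Lemma prov_atom_of_not_compl G p :
  prov ax true G (Not (Atom (compl p))) -> prov ax true G (Atom p).
Proof.
  intro Hn; destruct p as [t s | t s]; simpl in Hn.
  - apply EMminus_atom with (Atom (Eq t s)); [hyp |].
    apply p_botE, p_impE with (Atom (Neq t s)).
    + apply prov_weaken with G; [exact Hn | apply incl_tl, incl_refl].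
    + apply p_impE with (Not (Atom (Eq t s))); [apply p_ax, ax_HA, ax_neq2 | hyp].
  - apply p_impE with (Not (Atom (Eq t s))); [apply p_ax, ax_HA, ax_neq2 | exact Hn].
Qed.

Lemma MRK_provable_EMminus G p : prov ax true G (MRK p).
Proof.
  apply p_impI.
  apply p_EMminus with (Ex (Atom (compl p))); [reflexivity | hyp |].
  apply p_botE, p_impE with (All (Atom p)); [hyp |].
  apply p_allI, prov_atom_of_not_compl, p_impI.
  apply p_impE with (lift (Ex (Atom (compl p)))); [hyp |].
  apply prov_lift_ex_intro; hyp.
Qed.

End EMminus_proves_MRK.

Section MRK_derives_EMminus.

Variables (ax : form -> Prop) (em : bool).
Hypothesis ax_HA : forall B, HAax B -> ax B.
Hypothesis ax_MRK : forall B, MRKax B -> ax B.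

Lemma prov_not_ex_of_all_compl G p :
  prov ax em (All (Atom (compl p)) :: G) (Not (Ex (Atom p))).
Proof.
  apply p_impI, p_exE with (Atom p); [hyp |].
  apply prov_atom_compl_absurd with p; [assumption | hyp |].
  apply prov_lift_all_elim; simpl; tauto.
Qed.

Lemma EMminus_derivable_MRK G A p :
  prov ax em (A :: G) (Ex (Atom p)) -> prov ax em (Not A :: G) (Ex (Atom p)) ->
  prov ax em G (Ex (Atom p)).
Proof.
  intros HA HnA; rewrite <- (compl_involutive p).
  apply p_impE with (Not (All (Atom (compl p)))); [apply p_ax, ax_MRK, mrk_inst |].
  apply p_impI.
  assert (Hnex : forall B, prov ax em (B :: All (Atom (compl p)) :: G) (Not (Ex (Atom p))))
    by (intro B; apply prov_weaken with (All (Atom (compl p)) :: G);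
        [apply prov_not_ex_of_all_compl | apply incl_tl, incl_refl]).
  assert (Hincl : forall B, incl (B :: G) (B :: All (Atom (compl p)) :: G))
    by (intro B; apply incl_cons_cons, incl_tl, incl_refl).
  apply p_impE with (Not A); apply p_impI, p_impE with (Ex (Atom p));
    eauto using prov_weaken.
Qed.

End MRK_derives_EMminus.

Theorem mainTheorem7 :
  (forall p : atom, HA_EM [] (MRK p)) /\
  (forall (G : list form) (A : form) (p : atom),
      HA_MRK (A :: G) (Ex (Atom p)) ->
      HA_MRK (Not A :: G) (Ex (Atom p)) ->
      HA_MRK G (Ex (Atom p))).
Proof.
  split.
  - intro p; apply MRK_provable_EMminus; auto.
  - intros G A p; apply EMminus_derivable_MRK; auto.
Qed.
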